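(* Let $l$ be a positive integer and let $\alpha,\beta,\gamma,\alpha',\beta',\gamma'$ be real numbers such that $\alpha\ge 0$, $\alpha'\ge 0$, $\beta\ge 0$, $-\alpha'\le \beta'\le 0$, $\alpha+\beta+\gamma\ge 0$ and $\alpha'+\beta'+\gamma'\ge 0$. Let $T(n,k)$ be defined by $T(1,1)=1$, $T(n,k)=0$ unless $1\le k\le n$, and $$T(n,k)=(\alpha n+\beta k+\gamma)^l\,T(n-1,k)+(\alpha' n+\beta' k+\gamma')^l\,T(n-1,k-1)\qquad(n\ge 2,\ 1\le k\le n).$$ Then for every $n\ge 1$ the sequence $(T(n,k))_k$ is log-concave in $k$, i.e. $T(n,k)^2\ge T(n,k-1)T(n,k+1)$ for all $k$. *)

From Stdlib Require Import Reals.
Open Scope R_scope.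

Fixpoint T (a b c a' b' c' : R) (l : nat) (n k : nat) {struct n} : R :=
  match n with
  | O => 0
  | S m =>
    match m with
    | O => if Nat.eqb k 1 then 1 else 0
    | S _ =>
      if andb (Nat.leb 1 k) (Nat.leb k n) then
        (a * INR n + b * INR k + c) ^ l * T a b c a' b' c' l m k
        + (a' * INR n + b' * INR k + c') ^ l * T a b c a' b' c' l m (k - 1)
      else 0
    end
  end.

From Stdlib Require Import Reals Lra Lia Psatz.
Open Scope R_scope.

(* For a + b + c > 0 and a' + b' + c' > 0 the coefficients F(n,k) = a n + b k + c and
   G(n,k) = a' n + b' k + c' are positive on the triangle, and induction on n gives the
   stronger weighted inequality
     F(n,k)^l G(n,k)^l T(n,k-1) T(n,k+1) <= F(n,k-1)^l G(n,k+1)^l T(n,k)^2.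
   Expanding the recurrence reduces the inductive step to three inequalities between
   entries of the previous row; each follows from the weighted inequality for that row
   together with the 2x2 minor inequalities of F and G, which hold because b >= 0 >= b'.
   As F(n,k-1) <= F(n,k) and G(n,k+1) <= G(n,k), the weight ratio is at most 1, whence
   log-concavity.  The degenerate case follows by replacing c, c' with c + e, c' + e and
   letting e -> 0+, the entries of T being polynomials in e. *)

Lemma le_mul_of_ratio_le (A B Z W p q : R) :
  0 < p -> 0 <= A -> 0 <= W -> p * Z <= q * W -> A * q <= B * p -> A * Z <= B * W.
Proof. intros Hp HA HW HZW HAB. apply Rmult_le_reg_l with p; nra. Qed.

Lemma weighted_lc_outer (z0 z1 z2 z3 p1 q1 p2 q2 : R) :
  0 <= z0 -> 0 < z1 -> 0 < z2 -> 0 <= z3 -> 0 <= p1 -> 0 <= p2 ->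
  p1 * (z0 * z2) <= q1 * z1 ^ 2 -> p2 * (z1 * z3) <= q2 * z2 ^ 2 ->
  p1 * p2 * (z0 * z3) <= q1 * q2 * (z1 * z2).
Proof.
  intros Hz0 Hz1 Hz2 Hz3 Hp1 Hp2 H1 H2.
  apply Rmult_le_reg_l with (z1 * z2); [nra|].
  assert (Hprod : p1 * (z0 * z2) * (p2 * (z1 * z3)) <= q1 * z1 ^ 2 * (q2 * z2 ^ 2)).
  { apply Rmult_le_compat; try assumption; apply Rmult_le_pos; nra. }
  lra.
Qed.

Lemma lc_next_row (xm x0 xp ym y0 yp z0 z1 z2 z3 : R) :
  0 <= xm -> 0 <= x0 -> 0 <= y0 -> 0 <= yp ->
  y0 * xp * (z1 * z3) <= yp * x0 * z2 ^ 2 ->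
  x0 * ym * (z0 * z2) <= xm * y0 * z1 ^ 2 ->
  ym * xp * (z0 * z3) <= xm * yp * (z1 * z2) ->
  x0 * y0 * ((xm * z1 + ym * z0) * (xp * z3 + yp * z2))
    <= xm * yp * (x0 * z2 + y0 * z1) ^ 2.
Proof.
  intros Hxm Hx0 Hy0 Hyp H1 H2 H3.
  assert (Hgap : xm * yp * (x0 * z2 + y0 * z1) ^ 2
                 - x0 * y0 * ((xm * z1 + ym * z0) * (xp * z3 + yp * z2))
               = xm * x0 * (yp * x0 * z2 ^ 2 - y0 * xp * (z1 * z3))
                 + yp * y0 * (xm * y0 * z1 ^ 2 - x0 * ym * (z0 * z2))
                 + x0 * y0 * (xm * yp * (z1 * z2) - ym * xp * (z0 * z3))) by ring.
  assert (0 <= xm * x0 * (yp * x0 * z2 ^ 2 - y0 * xp * (z1 * z3))).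
  { apply Rmult_le_pos; [apply Rmult_le_pos|]; lra. }
  assert (0 <= yp * y0 * (xm * y0 * z1 ^ 2 - x0 * ym * (z0 * z2))).
  { apply Rmult_le_pos; [apply Rmult_le_pos|]; lra. }
  assert (0 <= x0 * y0 * (xm * yp * (z1 * z2) - ym * xp * (z0 * z3))).
  { apply Rmult_le_pos; [apply Rmult_le_pos|]; lra. }
  lra.
Qed.

Definition lin_coef (a b c : R) (n k : nat) : R := a * INR n + b * INR k + c.

Lemma lin_coef_mono (a b c : R) (n j k : nat) :
  0 <= b -> (j <= k)%nat -> lin_coef a b c n j <= lin_coef a b c n k.
Proof. intros Hb Hjk. apply le_INR in Hjk. unfold lin_coef. nra. Qed.

Lemma lin_coef_anti (a b c : R) (n j k : nat) :
  b <= 0 -> (j <= k)%nat -> lin_coef a b c n k <= lin_coef a b c n j.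
Proof. intros Hb Hjk. apply le_INR in Hjk. unfold lin_coef. nra. Qed.

Lemma lin_coef_minor_mono (a b c : R) (n j k : nat) : 0 <= a -> 0 <= b -> (j <= k)%nat ->
  lin_coef a b c (S n) (S k) * lin_coef a b c n j
    <= lin_coef a b c (S n) (S j) * lin_coef a b c n k.
Proof.
  intros Ha Hb Hjk. apply le_INR in Hjk. unfold lin_coef. rewrite !S_INR.
  assert (0 <= (INR k - INR j) * (a * b + b * b)) by (apply Rmult_le_pos; nra).
  nra.
Qed.

Lemma lin_coef_minor_anti (a b c : R) (n j k : nat) : 0 <= a -> b <= 0 -> (j <= k)%nat ->
  lin_coef a b c (S n) j * lin_coef a b c n k
    <= lin_coef a b c (S n) k * lin_coef a b c n j.
Proof.
  intros Ha Hb Hjk. apply le_INR in Hjk. unfold lin_coef. rewrite !S_INR.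
  assert (0 <= (INR k - INR j) * (a * - b)) by (apply Rmult_le_pos; nra).
  nra.
Qed.

Section Recurrence.
Variables (a b c a' b' c' : R) (l : nat).
Local Notation Tn := (T a b c a' b' c' l).

Lemma T_col0 n : Tn n 0 = 0.
Proof. now destruct n as [|[|m]]. Qed.

Lemma T_above_diag n k : (n < k)%nat -> Tn n k = 0.
Proof.
  intros Hnk. destruct n as [|[|m]]; simpl.
  - reflexivity.
  - destruct k as [|[|k]]; [reflexivity|lia|reflexivity].
  - replace (Nat.leb k (S (S m))) with false by (symmetry; apply Nat.leb_gt; lia).
    now rewrite Bool.andb_false_r.
Qed.

Lemma T_rec m i : (S i <= S (S m))%nat ->
  Tn (S (S m)) (S i) = lin_coef a b c (S (S m)) (S i) ^ l * Tn (S m) (S i)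
                       + lin_coef a' b' c' (S (S m)) (S i) ^ l * Tn (S m) i.
Proof.
  intros Hi. change (Tn (S (S m)) (S i)) with
    (if andb (Nat.leb 1 (S i)) (Nat.leb (S i) (S (S m))) then
       lin_coef a b c (S (S m)) (S i) ^ l * Tn (S m) (S i)
       + lin_coef a' b' c' (S (S m)) (S i) ^ l * Tn (S m) (S i - 1)
     else 0).
  replace (Nat.leb (S i) (S (S m))) with true by (symmetry; apply Nat.leb_le; lia).
  simpl. now rewrite Nat.sub_0_r.
Qed.

End Recurrence.

Definition lc_weighted (x y z : nat -> R) (k : nat) : Prop :=
  x k * y k * (z (pred k) * z (S k)) <= x (pred k) * y (S k) * z k ^ 2.

Section StrictlyPositive.
Variables (a b c a' b' c' : R) (l : nat).
Hypotheses (Ha : 0 <= a) (Hb : 0 <= b) (Ha' : 0 <= a') (Hab' : - a' <= b') (Hb' : b' <= 0)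
  (Habc : 0 < a + b + c) (Habc' : 0 < a' + b' + c').
Local Notation F := (lin_coef a b c).
Local Notation G := (lin_coef a' b' c').
Local Notation Tn := (T a b c a' b' c' l).

Lemma F_pos n k : (1 <= n)%nat -> (1 <= k)%nat -> 0 < F n k.
Proof.
  intros Hn Hk. apply le_INR in Hn, Hk. simpl in Hn, Hk. unfold lin_coef.
  assert (0 <= a * (INR n - 1)) by (apply Rmult_le_pos; lra).
  assert (0 <= b * (INR k - 1)) by (apply Rmult_le_pos; lra).
  lra.
Qed.

Lemma G_pos n k : (1 <= n)%nat -> (k <= n)%nat -> 0 < G n k.
Proof.
  intros Hn Hk. apply le_INR in Hn, Hk. simpl in Hn. unfold lin_coef.
  assert (0 <= (a' + b') * (INR n - 1)) by (apply Rmult_le_pos; lra).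
  assert (0 <= - b' * (INR n - INR k)) by (apply Rmult_le_pos; lra).
  lra.
Qed.

Lemma T_nonneg n k : 0 <= Tn n k.
Proof.
  revert k. induction n as [|[|m] IH]; intros k.
  - simpl; lra.
  - simpl. destruct (Nat.eqb k 1); lra.
  - destruct k as [|i]; [rewrite T_col0; lra|].
    destruct (Compare_dec.le_lt_dec (S i) (S (S m))) as [Hi|Hi];
      [|rewrite T_above_diag by lia; lra].
    rewrite T_rec by exact Hi.
    pose proof (F_pos (S (S m)) (S i) ltac:(lia) ltac:(lia)).
    pose proof (G_pos (S (S m)) (S i) ltac:(lia) Hi).
    pose proof (IH (S i)). pose proof (IH i).
    apply Rplus_le_le_0_compat; apply Rmult_le_pos; try apply pow_le; lra.
Qed.

Lemma T_pos n k : (1 <= k <= n)%nat -> 0 < Tn n k.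
Proof.
  revert k. induction n as [|[|m] IH]; intros k Hk; [lia| |].
  - replace k with 1%nat by lia. simpl; lra.
  - destruct k as [|i]; [lia|]. rewrite T_rec by lia.
    pose proof (pow_lt _ l (F_pos (S (S m)) (S i) ltac:(lia) ltac:(lia))).
    pose proof (pow_lt _ l (G_pos (S (S m)) (S i) ltac:(lia) ltac:(lia))).
    pose proof (T_nonneg (S m) (S i)). pose proof (T_nonneg (S m) i).
    destruct (Compare_dec.le_lt_dec (S i) (S m)).
    + pose proof (IH (S i) ltac:(lia)). nra.
    + pose proof (IH i ltac:(lia)). nra.
Qed.

(* Only interior k: at the ends of the row, F(n,k-1) or G(n,k+1) may be negative. *)
Definition row_lc n := forall k, (2 <= k)%nat -> (S k <= n)%nat ->
  lc_weighted (fun j => F n j ^ l) (fun j => G n j ^ l) (Tn n) k.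

Local Notation X n k := (F n k ^ l).
Local Notation Y n k := (G n k ^ l).

Lemma X_pos n k : (1 <= n)%nat -> (1 <= k)%nat -> 0 < X n k.
Proof. intros. apply pow_lt, F_pos; assumption. Qed.

Lemma Y_pos n k : (1 <= n)%nat -> (k <= n)%nat -> 0 < Y n k.
Proof. intros. apply pow_lt, G_pos; assumption. Qed.

Lemma weight_minors_le o j k j' k' :
  (1 <= o)%nat -> (1 <= j)%nat -> (j <= k)%nat -> (j' <= k')%nat -> (k' <= o)%nat ->
  X (S o) (S k) * X o j * (Y (S o) j' * Y o k')
    <= X (S o) (S j) * X o k * (Y (S o) k' * Y o j').
Proof.
  intros Ho Hj Hjk Hjk' Hk'. rewrite <- !Rpow_mult_distr. apply pow_incr. split.
  - pose proof (F_pos (S o) (S k) ltac:(lia) ltac:(lia)). pose proof (F_pos o j Ho Hj).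
    pose proof (G_pos (S o) j' ltac:(lia) ltac:(lia)). pose proof (G_pos o k' Ho Hk').
    apply Rmult_le_pos; apply Rmult_le_pos; lra.
  - apply Rmult_le_compat.
    + apply Rmult_le_pos; apply Rlt_le; apply F_pos; lia.
    + apply Rmult_le_pos; apply Rlt_le; apply G_pos; lia.
    + exact (lin_coef_minor_mono a b c o j k Ha Hb Hjk).
    + exact (lin_coef_minor_anti a' b' c' o j' k' Ha' Hb' Hjk').
Qed.

Section RowStep.
Variables (m i : nat).
Hypotheses (Hk : (S (S i) <= S m)%nat) (IH : row_lc (S m)).
Local Notation o := (S m).
Local Notation n := (S (S m)).
Local Notation k := (S (S i)).
Local Notation z := (Tn (S m)).

Lemma row_lc_step_right :
  Y n k * X n (S k) * (z (S i) * z (S k)) <= Y n (S k) * X n k * z k ^ 2.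
Proof.
  pose proof (Y_pos n (S k) ltac:(lia) ltac:(lia)).
  pose proof (X_pos n k ltac:(lia) ltac:(lia)).
  destruct (Compare_dec.le_lt_dec (S k) o) as [Hk1|Hk1].
  - apply le_mul_of_ratio_le with (X o k * Y o k) (X o (S i) * Y o (S k)).
    + apply Rmult_lt_0_compat; [apply X_pos|apply Y_pos]; lia.
    + apply Rmult_le_pos; apply Rlt_le; [apply Y_pos|apply X_pos]; lia.
    + apply pow2_ge_0.
    + exact (IH k ltac:(lia) Hk1).
    + pose proof (weight_minors_le o (S i) k k (S k) ltac:(lia) ltac:(lia) ltac:(lia) ltac:(lia) Hk1).
      lra.
  - rewrite (T_above_diag _ _ _ _ _ _ _ o (S k)) by lia.
    rewrite Rmult_0_r, Rmult_0_r.
    apply Rmult_le_pos; [nra|apply pow2_ge_0].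
Qed.

Lemma row_lc_step_left :
  X n k * Y n (S i) * (z i * z k) <= X n (S i) * Y n k * z (S i) ^ 2.
Proof.
  pose proof (X_pos n (S i) ltac:(lia) ltac:(lia)).
  pose proof (Y_pos n k ltac:(lia) ltac:(lia)).
  destruct i as [|i'] eqn:Ei.
  - rewrite T_col0, Rmult_0_l, Rmult_0_r.
    apply Rmult_le_pos; [nra|apply pow2_ge_0].
  - rewrite <- Ei in *.
    apply le_mul_of_ratio_le with (X o (S i) * Y o (S i)) (X o i * Y o k).
    + apply Rmult_lt_0_compat; [apply X_pos|apply Y_pos]; lia.
    + apply Rmult_le_pos; apply Rlt_le; [apply X_pos|apply Y_pos]; lia.
    + apply pow2_ge_0.
    + exact (IH (S i) ltac:(lia) ltac:(lia)).
    + pose proof (weight_minors_le o i (S i) (S i) k ltac:(lia) ltac:(lia) ltac:(lia) ltac:(lia) ltac:(lia)).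
      lra.
Qed.

Lemma row_lc_step_outer :
  Y n (S i) * X n (S k) * (z i * z (S k)) <= X n (S i) * Y n (S k) * (z (S i) * z k).
Proof.
  pose proof (X_pos n (S i) ltac:(lia) ltac:(lia)).
  pose proof (Y_pos n (S k) ltac:(lia) ltac:(lia)).
  pose proof (T_pos o (S i) ltac:(lia)). pose proof (T_pos o k ltac:(lia)).
  assert (Hrhs : 0 <= X n (S i) * Y n (S k) * (z (S i) * z k)) by
    (apply Rmult_le_pos; nra).
  destruct i as [|i'] eqn:Ei; [rewrite T_col0; lra|].
  rewrite <- Ei in *.
  destruct (Compare_dec.le_lt_dec (S k) o) as [Hk1|Hk1];
    [|rewrite (T_above_diag _ _ _ _ _ _ _ o (S k)) by lia; lra].
  pose proof (X_pos o i ltac:(lia) ltac:(lia)). pose proof (X_pos o (S i) ltac:(lia) ltac:(lia)).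
  pose proof (X_pos o k ltac:(lia) ltac:(lia)). pose proof (Y_pos o (S i) ltac:(lia) ltac:(lia)).
  pose proof (Y_pos o k ltac:(lia) ltac:(lia)). pose proof (Y_pos o (S k) ltac:(lia) Hk1).
  apply le_mul_of_ratio_le with (X o (S i) * Y o (S i) * (X o k * Y o k))
                                (X o i * Y o k * (X o (S i) * Y o (S k))).
  - apply Rmult_lt_0_compat; apply Rmult_lt_0_compat; assumption.
  - apply Rmult_le_pos; apply Rlt_le; [apply Y_pos|apply X_pos]; lia.
  - apply Rmult_le_pos; lra.
  - apply weighted_lc_outer; try apply T_nonneg; try apply Rmult_le_pos; try lra.
    + exact (IH (S i) ltac:(lia) ltac:(lia)).
    + exact (IH k ltac:(lia) Hk1).
  - pose proof (weight_minors_le o i k (S i) (S k) ltac:(lia) ltac:(lia) ltac:(lia) ltac:(lia) Hk1) as Hc.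
    assert (Hsc := Rmult_le_compat_l (X o (S i) * Y o k) _ _ ltac:(nra) Hc).
    lra.
Qed.

End RowStep.

Lemma row_lc_succ m : row_lc (S m) -> row_lc (S (S m)).
Proof.
  intros IH k Hk2 Hk. destruct k as [|[|i]]; [lia|lia|].
  unfold lc_weighted; cbn [pred].
  rewrite !T_rec by lia.
  apply lc_next_row.
  - apply Rlt_le, X_pos; lia.
  - apply Rlt_le, X_pos; lia.
  - apply Rlt_le, Y_pos; lia.
  - apply Rlt_le, Y_pos; lia.
  - now apply row_lc_step_right; try lia.
  - now apply row_lc_step_left; try lia.
  - now apply row_lc_step_outer; try lia.
Qed.

Lemma row_lc_all n : row_lc n.
Proof.
  destruct n as [|m]; [intros k Hk2 Hk; lia|].
  induction m as [|m IHm]; [intros k Hk2 Hk; lia|].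
  now apply row_lc_succ.
Qed.

Lemma T_log_concave_strict n k : Tn n (k - 1) * Tn n (k + 1) <= Tn n k ^ 2.
Proof.
  rewrite Nat.sub_1_r, Nat.add_1_r.
  assert (HP : 0 <= Tn n (pred k) * Tn n (S k)) by (apply Rmult_le_pos; apply T_nonneg).
  destruct (Compare_dec.le_lt_dec k 1) as [Hk1|Hk1].
  { replace (pred k) with 0%nat by lia. rewrite T_col0, Rmult_0_l. apply pow2_ge_0. }
  destruct (Compare_dec.le_lt_dec n k) as [Hkn|Hkn].
  { rewrite (T_above_diag _ _ _ _ _ _ _ n (S k)), Rmult_0_r by lia. apply pow2_ge_0. }
  pose proof (row_lc_all n k ltac:(lia) Hkn) as Hlc. unfold lc_weighted in Hlc.
  assert (Hw : 0 < X n (pred k) * Y n (S k)).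
  { apply Rmult_lt_0_compat; [apply X_pos|apply Y_pos]; lia. }
  assert (Hwv : X n (pred k) * Y n (S k) <= X n k * Y n k).
  { rewrite <- !Rpow_mult_distr. apply pow_incr. split.
    - apply Rlt_le, Rmult_lt_0_compat; [apply F_pos|apply G_pos]; lia.
    - apply Rmult_le_compat.
      + apply Rlt_le, F_pos; lia.
      + apply Rlt_le, G_pos; lia.
      + apply lin_coef_mono; [assumption|lia].
      + apply lin_coef_anti; [assumption|lia]. }
  apply Rmult_le_reg_l with (X n (pred k) * Y n (S k)); nra.
Qed.

End StrictlyPositive.

Lemma continuity_ext (f g : R -> R) : (forall x, f x = g x) -> continuity f -> continuity g.
Proof.
  intros Hfg Hf x. apply continuity_pt_locally_ext with f 1; [lra|intros; apply Hfg|apply Hf].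
Qed.

Lemma T_continuous_shift (a b c a' b' c' : R) (l n k : nat) :
  continuity (fun e => T a b (c + e) a' b' (c' + e) l n k).
Proof.
  revert k. induction n as [|[|m] IH]; intros k.
  - apply continuity_const. intros x y. reflexivity.
  - apply continuity_const. intros x y. reflexivity.
  - destruct k as [|i].
    { apply continuity_const. intros x y. now rewrite !T_col0. }
    destruct (Compare_dec.le_lt_dec (S i) (S (S m))) as [Hi|Hi].
    + pose (f1 e := T a b (c + e) a' b' (c' + e) l (S m) (S i)).
      pose (f0 e := T a b (c + e) a' b' (c' + e) l (S m) i).
      assert (H1 : continuity f1) by apply IH. assert (H0 : continuity f0) by apply IH.
      apply continuity_ext with (fun e =>
        lin_coef a b (c + e) (S (S m)) (S i) ^ l * f1 e
        + lin_coef a' b' (c' + e) (S (S m)) (S i) ^ l * f0 e).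
      { intro e. symmetry. apply T_rec, Hi. }
      unfold lin_coef. reg.
    + apply continuity_const. intros x y. now rewrite !T_above_diag by lia.
Qed.

Lemma nonneg_of_continuous_right (h : R -> R) :
  continuity_pt h 0 -> (forall e, 0 < e -> 0 <= h e) -> 0 <= h 0.
Proof.
  intros Hc Hpos. destruct (Rle_lt_dec 0 (h 0)) as [H|H]; [exact H|exfalso].
  destruct (Hc (- h 0) ltac:(lra)) as [d [Hd Hball]].
  assert (Hd2 : D_x no_cond 0 (d / 2) /\ R_dist (d / 2) 0 < d).
  { split; [split; [exact I|lra]|]. unfold R_dist. rewrite Rminus_0_r, Rabs_right; lra. }
  specialize (Hball (d / 2) Hd2). simpl in Hball. unfold R_dist in Hball.
  pose proof (Hpos (d / 2) ltac:(lra)). pose proof (Rle_abs (h (d / 2) - h 0)). lra.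
Qed.

Theorem theorem1p4 (l : nat) (a b c a' b' c' : R) :
  (1 <= l)%nat ->
  0 <= a -> 0 <= a' -> 0 <= b -> - a' <= b' -> b' <= 0 ->
  0 <= a + b + c -> 0 <= a' + b' + c' ->
  forall n k : nat, (1 <= n)%nat ->
    T a b c a' b' c' l n k ^ 2 >=
    T a b c a' b' c' l n (k - 1) * T a b c a' b' c' l n (k + 1).
Proof.
  intros _ Ha Ha' Hb Hab' Hb' Habc Habc' n k _.
  pose (t j e := T a b (c + e) a' b' (c' + e) l n j).
  pose (gap e := t k e ^ 2 - t (k - 1)%nat e * t (k + 1)%nat e).
  assert (Hgap : 0 <= gap 0).
  { apply nonneg_of_continuous_right.
    - assert (continuity (t k)) by apply T_continuous_shift.
      assert (continuity (t (k - 1)%nat)) by apply T_continuous_shift.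
      assert (continuity (t (k + 1)%nat)) by apply T_continuous_shift.
      unfold gap. reg.
    - intros e He. unfold gap.
      assert (t (k - 1)%nat e * t (k + 1)%nat e <= t k e ^ 2)
        by (apply T_log_concave_strict; lra).
      lra. }
  unfold gap, t in Hgap. rewrite !Rplus_0_r in Hgap. lra.
Qed.
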